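(* Let $n\ge3$ and let $\overrightarrow{C_n}$ be $\Theta$-oriented. For a distance set $D\subseteq\{0,1,\dots,n-2\}$ of $\overrightarrow{C_n}$, $\overrightarrow{C_n}$ is $D$-antimagic if and only if $\min(D)\le1$.
   Context: An oriented graph is a simple graph each of whose edges is given one direction (an arc $(u,v)$ goes from $u$ to $v$). For vertices $u,v$, $d(u,v)$ is the length of a shortest directed path from $u$ to $v$ ($d(u,u)=0$, $\infty$ if no path). A distance set of an oriented graph is a nonempty set $D$ of nonnegative integers each of which is a finite distance $d(u,v)$ for some pair of vertices. $N_D(v)=\{y : d(v,y)\in D\}$; for a bijection $f:V\to\{1,\dots,|V|\}$, $\omega_D(v)=\sum_{x\in N_D(v)}f(x)$ (empty sum $0$); $f$ is $D$-antimagic if distinct vertices have distinct $D$-weights, and the graph is $D$-antimagic if such an $f$ exists. A $\Theta$-oriented cycle $\overrightarrow{C_n}$ is an orientation of the $n$-cycle with exactly one source (in-degree $0$) and exactly one sink (out-degree $0$), which are adjacent; up to relabeling, its vertices are $v_1,\dots,v_n$ and its arcs are $(v_i,v_{i+1})$, $1\le i\le n-1$, and $(v_1,v_n)$. Its diameter is $n-2$. *)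

From mathcomp Require Import all_boot.
Set Implicit Arguments. Unset Strict Implicit. Unset Printing Implicit Defensive.

Section Oriented.
Variable T : finType.
Variable arc : rel T.

Fixpoint walk (k : nat) (u v : T) : bool :=
  match k with
  | 0 => u == v
  | k'.+1 => [exists w, arc u w && walk k' w v]
  end.

Definition dist_is (u v : T) (k : nat) : bool :=
  walk k u v && [forall j : 'I_k, ~~ walk j u v].

Definition distance_set (D : pred nat) : Prop :=
  (exists k, D k) /\ forall k, D k -> exists u v, dist_is u v k.

Definition ND (D : pred nat) (v : T) : {set T} :=
  [set y | [exists k : 'I_#|T|.+1, D k && dist_is v y k]].

Definition labeling (f : T -> nat) : Prop :=
  injective f /\ forall x, 1 <= f x <= #|T|.

Definition Dweight (D : pred nat) (f : T -> nat) (v : T) : nat :=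
  \sum_(x in ND D v) f x.

Definition D_antimagic_labeling (D : pred nat) (f : T -> nat) : Prop :=
  labeling f /\ injective (Dweight D f).

Definition D_antimagic (D : pred nat) : Prop :=
  exists f, D_antimagic_labeling D f.
End Oriented.

(* Theta-oriented cycle on vertices v_1..v_n represented as 0..n-1:
   arcs (v_i, v_{i+1}) for 1 <= i <= n-1, and (v_1, v_n). *)
Definition theta_arc (n : nat) : rel 'I_n :=
  fun u v => (val v == (val u).+1) || ((val u == 0) && (val v == n.-1)).
Arguments theta_arc n : clear implicits.

Definition natset (m : nat) (D : {set 'I_m}) : pred nat :=
  fun k => [exists i in D, val i == k].

From mathcomp Require Import all_boot.
From mathcomp Require Import zify.

Set Implicit Arguments. Unset Strict Implicit. Unset Printing Implicit Defensive.

(* Vertex [i] only reaches [i + k] at distance [k], except for the arc [0 -> n-1].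
   If [min D >= 2], the last two vertices therefore have empty [D]-neighbourhoods
   and equal weight [0].  If [min D <= 1], label vertex [i] by [n - i]: the map
   [y |-> y - 1] injects [N_D(i+1)] into [N_D(i)] and raises every label by one,
   while [N_D(i)] is nonempty, so the weights strictly decrease along the cycle. *)

Section ThetaCycle.

Variable n : nat.
Hypothesis n_gt1 : 1 < n.
Local Notation arc := (theta_arc n).

Lemma walk_thetaE k (u v : 'I_n) :
  walk arc k u v = (v == u + k :> nat) || [&& u == 0 :> nat, v == n.-1 :> nat & k == 1].
Proof.
elim: k u => [|k IHk] u /=; first by rewrite addn0 !andbF orbF eq_sym.
have lt_un := ltn_ord u; have lt_vn := ltn_ord v; have lt_n1n : n.-1 < n by lia.
apply/existsP/idP => [[w /andP[]]|].
  by rewrite /theta_arc IHk /=; have := ltn_ord w; lia.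
case/orP=> [/eqP vE | /and3P[/eqP u0 /eqP vE /eqP k0]].
  have lt_u1n : u.+1 < n by lia.
  by exists (Ordinal lt_u1n); rewrite /theta_arc IHk /=; lia.
by exists (Ordinal lt_n1n); rewrite /theta_arc IHk /=; lia.
Qed.

Lemma dist_thetaP (u v : 'I_n) k : dist_is arc u v k ->
  v = u + k :> nat \/ [/\ u = 0 :> nat, v = n.-1 :> nat & k = 1].
Proof.
case/andP; rewrite walk_thetaE => /orP[/eqP vE | /and3P[/eqP u0 /eqP vE /eqP k1]] _.
  by left.
by right.
Qed.

Lemma dist_theta_add (u v : 'I_n) k :
  v = u + k :> nat -> (v < n.-1) || (k <= 1) -> dist_is arc u v k.
Proof.
move=> vE vk; apply/andP; split; first by rewrite walk_thetaE vE eqxx.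
by apply/forallP => j; rewrite walk_thetaE; have := ltn_ord j; lia.
Qed.

Variable D : pred nat.
Local Notation N := (ND arc D).
Local Notation weight := (Dweight arc D).

Lemma mem_NDP (v y : 'I_n) :
  reflect (exists2 k, D k & dist_is arc v y k) (y \in N v).
Proof.
rewrite inE card_ord; apply: (iffP existsP) => [[k /andP[Dk dk]] | [k Dk dk]].
  by exists k.
have lt_kn1 : k < n.+1.
  by have := ltn_ord y; case: (dist_thetaP dk) => [|[]]; lia.
by exists (Ordinal lt_kn1); rewrite Dk.
Qed.

Lemma ND_theta_tail (v : 'I_n) :
  (forall k, D k -> 2 <= k) -> n.-2 <= v -> N v = set0.
Proof.
move=> D_ge2 le_v; apply/setP => y; rewrite in_set0.
apply/mem_NDP => -[k /D_ge2 ge2_k /dist_thetaP dk].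
by have := ltn_ord y; case: dk => [|[]]; lia.
Qed.

Definition ord_predn (y : 'I_n) : 'I_n :=
  Ordinal (leq_ltn_trans (leq_pred y) (ltn_ord y)).

Lemma ND_theta_succ (i j y : 'I_n) : j = i.+1 :> nat -> y \in N j ->
  0 < y /\ ord_predn y \in N i.
Proof.
move=> jE /mem_NDP[k Dk /dist_thetaP[yE | [j0 _ _]]]; last by rewrite jE in j0.
have lt_yn := ltn_ord y; split; first by lia.
by apply/mem_NDP; exists k => //; apply: dist_theta_add => /=; lia.
Qed.

Lemma ND_theta_neq0 m (i : 'I_n) : m <= 1 -> D m -> i.+1 < n -> N i != set0.
Proof.
move=> le_m1 Dm lt_i1n; have lt_imn : i + m < n by lia.
apply/set0Pn; exists (Ordinal lt_imn); apply/mem_NDP; exists m => //.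
by apply: dist_theta_add => /=; lia.
Qed.

Definition rev_label (v : 'I_n) : nat := n - v.

Lemma rev_label_labeling : labeling rev_label.
Proof.
split=> [x y | x]; last by rewrite card_ord /rev_label; have := ltn_ord x; lia.
by rewrite /rev_label => xy; apply: ord_inj; have := ltn_ord x; have := ltn_ord y; lia.
Qed.

Local Notation rweight := (weight rev_label).

Lemma rweight_succ_card (i j : 'I_n) : j = i.+1 :> nat ->
  rweight j + #|N j| <= rweight i.
Proof.
move=> jE; rewrite /Dweight -sum1_card -big_split /=.
have inj_pred : {in N j &, injective ord_predn}.
  move=> x y /(ND_theta_succ jE)[x_gt0 _] /(ND_theta_succ jE)[y_gt0 _] /(congr1 val) xy.
  by apply: ord_inj; rewrite /= in xy; lia.
have sub_pred : ord_predn @: N j \subset N i.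
  by apply/subsetP => _ /imsetP[x /(ND_theta_succ jE)[_ ?] ->].
rewrite [X in _ <= X](big_setID (ord_predn @: N j)) (setIidPr sub_pred) (big_imset _ inj_pred) /=.
apply: leq_trans (leq_addr _ _); apply: leq_sum => x /(ND_theta_succ jE)[x_gt0 _].
by rewrite /rev_label /=; have := ltn_ord x; lia.
Qed.

Lemma rweight_succ_lt m (i j : 'I_n) : m <= 1 -> D m -> j = i.+1 :> nat ->
  rweight j < rweight i.
Proof.
move=> le_m1 Dm jE; have lt_i1n : i.+1 < n by rewrite -jE.
have le_ji := rweight_succ_card jE.
have [Nj0 | /set0Pn[y yNj]] := eqVneq (N j) set0.
  have /set0Pn[y yNi] := ND_theta_neq0 le_m1 Dm lt_i1n.
  rewrite /Dweight Nj0 big_set0 (bigD1 y) //= /rev_label.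
  by have := ltn_ord y; lia.
have : 0 < #|N j| by rewrite card_gt0; apply/set0Pn; exists y.
by lia.
Qed.

Lemma rweight_decr m (i j : 'I_n) : m <= 1 -> D m -> i < j -> rweight j < rweight i.
Proof.
move=> le_m1 Dm lt_ij; have [d jE] : exists d, j = i + d.+1 :> nat.
  by exists (j - i.+1); lia.
elim: d j {lt_ij} jE => [|d IHd] j jE; first by apply: rweight_succ_lt; lia.
have lt_idn : i + d.+1 < n by have := ltn_ord j; lia.
apply: ltn_trans (IHd (Ordinal lt_idn) erefl).
by apply: (rweight_succ_lt le_m1 Dm) => /=; lia.
Qed.

Lemma D_antimagic_theta m : m <= 1 -> D m -> D_antimagic arc D.
Proof.
move=> le_m1 Dm; exists rev_label; split; first exact: rev_label_labeling.
move=> a b wab; case: (ltngtP a b) => [lt_ab | lt_ba | /ord_inj //].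
  by have := rweight_decr le_m1 Dm lt_ab; rewrite wab ltnn.
by have := rweight_decr le_m1 Dm lt_ba; rewrite wab ltnn.
Qed.

Lemma not_D_antimagic_theta : (forall k, D k -> 2 <= k) -> ~ D_antimagic arc D.
Proof.
move=> D_ge2 [F [_ inj_weight]].
have lt_n1n : n.-1 < n by lia.
have lt_n2n : n.-2 < n by lia.
have weight_tail0 (v : 'I_n) : n.-2 <= v -> weight F v = 0.
  by move=> le_v; rewrite /Dweight (ND_theta_tail D_ge2 le_v) big_set0.
have /(congr1 val) /= : Ordinal lt_n1n = Ordinal lt_n2n.
  by apply: inj_weight; rewrite !weight_tail0 //= leq_pred.
by lia.
Qed.

End ThetaCycle.

Theorem mainTheorem8 (n : nat) (D : {set 'I_(n.-1)}) :
  3 <= n ->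
  distance_set (theta_arc n) (natset D) ->
  (D_antimagic (theta_arc n) (natset D)
   <-> exists2 k : 'I_(n.-1), k \in D & val k <= 1).
Proof.
move=> n_ge3 _; have n_gt1 : 1 < n by lia.
split=> [antimagic | [k kD le_k1]]; last first.
  apply: (D_antimagic_theta n_gt1 le_k1).
  by apply/existsP; exists k; rewrite kD eqxx.
have [/exists_inP[k kD le_k1] | /exists_inPn D_ge2] := boolP [exists k in D, val k <= 1].
  by exists k.
case: (not_D_antimagic_theta n_gt1 _ antimagic) => k /existsP[i /andP[iD /eqP <-]].
by have := D_ge2 i iD; lia.
Qed.
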